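(* Let $b>0$ and let $f:\mathbb{R}\to\mathbb{R}$ be any function. Suppose $g_1,g_2:\mathbb{R}\to\mathbb{R}$ are measurable functions such that for every $q\in\mathbb{R}$, with $Z\sim\operatorname{Lap}(0,b)$, the expectations $\mathbb{E}[g_1(q+Z)]$ and $\mathbb{E}[g_2(q+Z)]$ exist (are finite) and $\mathbb{E}[g_1(q+Z)]=\mathbb{E}[g_2(q+Z)]=f(q)$. Then $g_1=g_2$ almost everywhere (with respect to Lebesgue measure).
   Context: $\operatorname{Lap}(0,b)$ denotes the Laplace distribution with density $\frac{1}{2b}e^{-|x|/b}$ on $\mathbb{R}$. *)

From HB Require Import structures.
From mathcomp Require Import all_boot all_order all_algebra.
From mathcomp Require Import all_classical all_reals all_analysis.
Set Implicit Arguments. Unset Strict Implicit. Unset Printing Implicit Defensive.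
Import Order.TTheory GRing.Theory Num.Theory.
Local Open Scope ring_scope.
Local Open Scope classical_set_scope.

Definition laplace_pdf (R : realType) (b : R) (x : R) : R :=
  (2 * b)^-1 * expR (- `|x| / b).

Definition laplace_shift_integrable (R : realType) (b : R) (g : R -> R) (q : R) : Prop :=
  (@lebesgue_measure R).-integrable setT
     (fun z => (g (q + z) * laplace_pdf b z)%:E).

Definition laplace_shift_expect (R : realType) (b : R) (g : R -> R) (q : R) : \bar R :=
  (\int[@lebesgue_measure R]_z (g (q + z) * laplace_pdf b z)%:E)%E.

From HB Require Import structures.
From mathcomp Require Import all_boot all_order all_algebra.
From mathcomp Require Import all_classical all_reals all_analysis.
From mathcomp Require Import measurable_realfun.
From mathcomp.algebra_tactics Require Import ring lra.
Import Order.TTheory GRing.Theory Num.Theory.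
Import numFieldNormedType.Exports.
Local Open Scope ring_scope.
Local Open Scope classical_set_scope.
Set Implicit Arguments. Unset Strict Implicit. Unset Printing Implicit Defensive.

(** Put h := g1 - g2, so that x |-> h x * pdf (x - q) has integral 0 for every q.
   Splitting this integral at q gives, with L q := \int_(-oo, q] h x e^(x/b) dx
   and U q := \int_(q, +oo) h x e^(-x/b) dx, the identity
   L q + e^(2q/b) U q = 0 for every q.  By the Lebesgue differentiation theorem
   L' = h e^(x/b) and U' = - h e^(-x/b) almost everywhere, and differentiating
   the identity at such a point gives U = 0 there, hence L = 0 almost
   everywhere.  A function that vanishes almost everywhere has derivative 0 at
   every zero where it is differentiable, so h e^(x/b) = L' = 0 a.e. *)

Section lebesgue_translation.
Context {R : realType}.
Local Notation mu := (@lebesgue_measure R).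
Variable q : R.

Let measurable_addq :
  measurable_fun setT (+%R q : measurableTypeR R -> measurableTypeR R).
Proof. exact: measurable_funD. Qed.

Lemma lebesgue_measureD (A : set R) : measurable A ->
  pushforward mu (+%R q : _ -> measurableTypeR R) A = mu A.
Proof.
move=> mA; apply/esym/lebesgue_measure_unique => //= _ [[x y]] _ <-.
rewrite /pushforward /=.
have -> : +%R q @^-1` `]x, y] = `](x - q), (y - q)].
  by apply/seteqP; split => z; rewrite /= !in_itv /= ltrBlDl lerBrDl.
rewrite !lebesgue_measure_itv /= !lte_fin ltrD2r.
by case: ifP => //; rewrite -!EFinD opprB addrA subrK.
Qed.

Local Open Scope ereal_scope.

Lemma integrable_translate (f : R -> \bar R) : measurable_fun setT f ->
  mu.-integrable setT (fun z => f (q + z)%R) -> mu.-integrable setT f.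
Proof.
move=> mf intf; apply/integrableP; split => //.
have /integrableP[_] := integrable_pushforward measurable_addq mf
  (D := setT) (mu := mu) ltac:(by rewrite preimage_setT) measurableT.
by rewrite (@eq_measure_integral _ _ _ _ mu) // => A mA _; exact: lebesgue_measureD.
Qed.

Lemma integral_translate (f : R -> \bar R) : measurable_fun setT f ->
  mu.-integrable setT (fun z => f (q + z)%R) ->
  \int[mu]_z f (q + z)%R = \int[mu]_x f x.
Proof.
move=> mf intf.
have := integral_pushforward measurable_addq mf
  (D := setT) (mu := mu) ltac:(by rewrite preimage_setT) measurableT.
rewrite preimage_setT => <-.
by apply: eq_measure_integral => A mA _; exact: lebesgue_measureD.
Qed.

End lebesgue_translation.

Section derivative_ae_eq0.
Context {R : realType}.
Local Notation mu := (@lebesgue_measure R).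

Lemma is_derive_ae_eq0 (F : R -> R) (x d : R) :
  {ae mu, forall y, F y = 0} -> F x = 0 -> is_derive x 1 F d -> d = 0.
Proof.
move=> [N [mN N0 FN]] Fx0 dF; apply: contrapT => /eqP d0.
have Fcvg : (fun t => t^-1 *: ((F \o shift x) (t *: 1) - F x)) @ 0^' --> d.
  by case: dF => dF <-; exact: dF.
have [e e0 Fne0] : exists2 e : R, 0 < e & forall t, 0 < t < e -> F (t + x) != 0.
  have /cvgrPdist_lt/(_ `|d|) := Fcvg.
  rewrite normr_gt0 => /(_ d0) /nbhs_ballP[e /= e0 Fe].
  exists e => // t /andP[t0 te]; apply: contraTN (Fe t _ _) => [/eqP Ft||].
  - by rewrite /= /shift /= -[t%:A]/(t * 1) mulr1 Ft Fx0 subrr scaler0 subr0 ltxx.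
  - by rewrite /ball /= sub0r normrN gtr0_norm.
  - by rewrite gt_eqF.
have : `]x, x + e[ `<=` N.
  move=> z; rewrite /= in_itv /= => /andP[xz ze]; apply: FN => Fz.
  by move: (Fne0 (z - x)); rewrite subrK Fz eqxx subr_gt0 xz ltrBlDl ze => /(_ isT).
move=> /(le_measure mu (mem_set (measurable_itv _)) (mem_set mN)).
rewrite [X in (_ <= X)%E]N0 [X in (X <= _)%E]lebesgue_measure_itv /=.
by rewrite lte_fin ltrDl e0 -EFinD addrAC subrr add0r lee_fin leNgt e0.
Qed.
End derivative_ae_eq0.

Section tail_integrals.
Context {R : realType}.
Local Notation mu := (@lebesgue_measure R).
Implicit Types f : R -> R.

Lemma integrable_cover_locally f : measurable_fun setT f ->
  (forall N : R, exists2 E : set R, measurable E /\ `[- N, N] `<=` E &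
     mu.-integrable E (EFin \o f)) ->
  locally_integrable setT f.
Proof.
move=> mf fE; split => // [|K _ cK]; first exact: openT.
have [M [_ KM]] := compact_bounded cK.
have [E [mE NE] /integrableP[_ fEfin]] := fE (M + 1).
apply: le_lt_trans fEfin; apply: ge0_subset_integral => //.
- exact: compact_measurable.
- by apply/measurable_EFinP/measurableT_comp => //; exact: measurable_funS mf.
- move=> x /(KM (M + 1)) Kx; apply: NE; rewrite /= in_itv /= -ler_norml.
  by apply: Kx; rewrite ltrDl.
Qed.

Lemma integrable_lower_tails_locally f : measurable_fun setT f ->
  (forall y, mu.-integrable `]-oo, y] (EFin \o f)) -> locally_integrable setT f.
Proof.
move=> mf intf; apply: integrable_cover_locally => // N; exists `]-oo, N] => //.
by split=> // x; rewrite /= !in_itv /= => /andP[].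
Qed.

Lemma integrable_upper_tails_locally f : measurable_fun setT f ->
  (forall y, mu.-integrable `]y, +oo[ (EFin \o f)) -> locally_integrable setT f.
Proof.
move=> mf intf; apply: integrable_cover_locally => // N.
exists `](- N - 1), +oo[ => //; split=> // x; rewrite /= !in_itv /= andbT.
move=> /andP[Nx _]; lra.
Qed.

Lemma FTC1Ny_is_derive f : measurable_fun setT f ->
  (forall y, mu.-integrable `]-oo, y] (EFin \o f)) ->
  let F x := (\int[mu]_(t in `]-oo, x]) f t)%R in
  {ae mu, forall x : R, is_derive x 1 F (f x)}.
Proof.
move=> mf intf F; have := FTC1Ny intf (integrable_lower_tails_locally mf intf).
have aefilter := ae_filter_ringOfSetsType mu.
by apply: filterS => x [dF <-]; rewrite derive1E; exact: derivableP.
Qed.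

Lemma FTC1y_is_derive f : measurable_fun setT f ->
  (forall y, mu.-integrable `]y, +oo[ (EFin \o f)) ->
  let F x := (\int[mu]_(t in `]x, +oo[) f t)%R in
  {ae mu, forall x : R, is_derive x 1 F (- f x)}.
Proof.
move=> mf intf F.
pose G (n : nat) y := (\int[mu]_(t in `](- n%:R), y]) f t)%R.
have FG n y : - n%:R <= y -> F y = F (- n%:R) - G n y.
  move=> ny; apply/esym.
  have := @Rintegral_itvB R f (BRight (- n%:R)) (BInfty _ false) y (intf _).
  by rewrite bnd_simp => ->.
have intG n y : mu.-integrable `](- n%:R), y] (EFin \o f).
  by apply: integrableS (intf (- n%:R)) => // z; rewrite /= !in_itv /= => /andP[-> _].
have /ae_foralln := fun n => FTC1 (intG n) (integrable_upper_tails_locally mf intf).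
apply: filterS => x dG.
pose n := (Num.truncn `|x|).+1.
have nx : - n%:R < x.
  have := truncnS_gt `|x|; have := ler_norml x `|x|; rewrite lexx => /esym/andP[? _].
  rewrite -/n; lra.
have [|dGx dGxE] := dG n; first by rewrite /= lte_fin.
have dFG : is_derive x 1 (fun y => F (- n%:R) - G n y) (- f x).
  rewrite -dGxE derive1E -[X in is_derive _ _ _ X]sub0r.
  by apply: is_deriveB; exact: derivableP.
apply: near_eq_is_derive dFG.
by near=> y; apply/esym/FG/ltW; near: y; exact: lt_nbhsr.
Unshelve. all: by end_near.
Qed.

End tail_integrals.

Section laplace_pdf.
Context {R : realType}.
Variable b : R.

Lemma measurable_laplace_pdf : measurable_fun setT (laplace_pdf b).
Proof.
apply: measurable_funM => //; apply: measurableT_comp => //.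
by apply: measurable_funM => //; apply: measurableT_comp => //; apply: measurableT_comp.
Qed.

Lemma laplace_pdfB_le q x : x <= q ->
  laplace_pdf b (x - q) = (2 * b)^-1 * expR (- q / b) * expR (x / b).
Proof.
move=> xq; rewrite /laplace_pdf ler0_norm ?subr_le0 // opprK -mulrA -expRD.
by congr (_ * expR _); rewrite mulrBl addrC mulNr.
Qed.

Lemma laplace_pdfB_gt q x : q < x ->
  laplace_pdf b (x - q) = (2 * b)^-1 * expR (q / b) * expR (- x / b).
Proof.
move=> qx; rewrite /laplace_pdf gtr0_norm ?subr_gt0 // -mulrA -expRD.
by congr (_ * expR _); rewrite opprB mulrBl !mulNr.
Qed.

End laplace_pdf.

Section laplace_convolution.
Context {R : realType}.
Local Notation mu := (@lebesgue_measure R).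
Variables (b : R) (h : R -> R).
Hypothesis b_gt0 : 0 < b.
Hypothesis mh : measurable_fun setT h.
Hypothesis h_int : forall q,
  mu.-integrable setT (fun x => (h x * laplace_pdf b (x - q))%:E).
Hypothesis h_conv0 : forall q, \int[mu]_x (h x * laplace_pdf b (x - q)) = 0.

Let lower x := h x * expR (x / b).
Let upper x := h x * expR (- x / b).
Let L q := \int[mu]_(x in `]-oo, q]) lower x.
Let U q := \int[mu]_(x in `]q, +oo[) upper x.

Let b_neq0 : b != 0. Proof. by rewrite gt_eqF. Qed.
Let expR_neq0 (x : R) : expR x != 0. Proof. by rewrite gt_eqF ?expR_gt0. Qed.

Let measurable_lower : measurable_fun setT lower.
Proof. by apply: measurable_funM => //; apply: measurableT_comp => //; exact: measurable_funM. Qed.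

Let measurable_upper : measurable_fun setT upper.
Proof.
apply: measurable_funM => //; apply: measurableT_comp => //.
by apply: measurable_funM => //; exact: measurableT_comp.
Qed.

Let integrable_lower q : mu.-integrable `]-oo, q] (EFin \o lower).
Proof.
have mq : measurable (`]-oo, q] : set (measurableTypeR R)) by [].
have := integrableZl mq (2 * b * expR (q / b))
  (integrableS measurableT mq (subsetT _) (h_int q)).
apply: eq_integrable => // x; rewrite inE /= in_itv /= => xq.
rewrite -EFinM laplace_pdfB_le // mulNr expRN /lower; congr EFin.
by field; rewrite b_neq0 expR_neq0.
Qed.

Let integrable_upper q : mu.-integrable `]q, +oo[ (EFin \o upper).
Proof.
have mq : measurable (`]q, +oo[ : set (measurableTypeR R)) by [].
have := integrableZl mq (2 * b * expR (- q / b))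
  (integrableS measurableT mq (subsetT _) (h_int q)).
apply: eq_integrable => // x; rewrite inE /= in_itv /= andbT => qx.
rewrite -EFinM /upper laplace_pdfB_gt // !mulNr !expRN; congr EFin.
by field; rewrite b_neq0 !expR_neq0.
Qed.

Let tails_balance q : L q + expR (2 * q / b) * U q = 0.
Proof.
have setTE : [set: R] = `]-oo, q] `|` `]q, +oo[.
  by rewrite -set_itvNyy (@itv_bndbnd_setU _ _ _ (BRight q)).
have := h_conv0 q; rewrite setTE Rintegral_setU //; last 2 first.
- by apply: integrableS (h_int q) => //; exact: measurableU.
- apply/disj_setPS => z []; rewrite /= !in_itv /= andbT.
  by move=> /le_lt_trans /[apply]; rewrite ltxx.
have -> : \int[mu]_(x in `]-oo, q]) (h x * laplace_pdf b (x - q))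
    = (2 * b)^-1 * expR (- q / b) * L q.
  rewrite -RintegralZl //; apply: eq_Rintegral => x; rewrite inE /= in_itv /= => xq.
  by rewrite laplace_pdfB_le // /lower; ring.
have -> : \int[mu]_(x in `]q, +oo[) (h x * laplace_pdf b (x - q))
    = (2 * b)^-1 * expR (q / b) * U q.
  rewrite -RintegralZl //; apply: eq_Rintegral => x; rewrite inE /= in_itv /= andbT => qx.
  by rewrite laplace_pdfB_gt // /upper; ring.
have -> : expR (2 * q / b) = expR (q / b) * expR (q / b).
  by rewrite -expRD; congr expR; field.
rewrite mulNr expRN; set E := expR (q / b) => balance0.
have -> : L q + E * E * U q = 2 * b * E * ((2 * b)^-1 / E * L q + (2 * b)^-1 * E * U q).
  by field; rewrite b_neq0 expR_neq0.
by rewrite balance0 mulr0.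
Qed.

Let tails_vanish (x : R) :
  is_derive x 1 L (lower x) -> is_derive x 1 U (- upper x) -> L x = 0.
Proof.
move=> dL dU.
have LE : L = - ((expR \o ( *%R^~ (2 / b))) * U).
  apply/funext => y; apply/eqP; rewrite -addr_eq0 !fctE /=.
  by rewrite mulrA [y * 2]mulrC tails_balance.
pose proof (_ : is_derive x 1 (- ((expR \o ( *%R^~ (2 / b))) * U)) _) as dE.
have := derive_val (is_derive := dE); rewrite -LE (derive_val (is_derive := dL)) /=.
rewrite /lower /upper mulNr expRN.
have -> : expR (x * (2 / b)) = expR (x / b) * expR (x / b).
  by rewrite -expRD; congr expR; field.
move: (expR_neq0 (x / b)); set E := expR (x / b) => E_neq0 deriv_eq.
have : U x * (E * E * (2 / b)) = 0.
  rewrite -(subrr (h x * E)) [X in _ = _ - X]deriv_eq.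
  rewrite scaler0 add0r -[(2 / b)%:A]/(2 / b * 1) mulr1 -![_ *: _]/(_ * _).
  by field; rewrite b_neq0 E_neq0.
have EEb_neq0 : E * E * (2 / b) != 0 by rewrite !mulf_neq0 ?invr_eq0.
move/eqP; rewrite mulf_eq0 (negbTE EEb_neq0) orbF => /eqP U0.
by rewrite LE !fctE U0 mulr0 oppr0.
Qed.

Lemma ae_eq0_of_laplace_conv_eq0 : {ae mu, forall x, h x = 0}.
Proof.
have aefilter := ae_filter_ringOfSetsType mu.
have L_ae0 : {ae mu, forall x, L x = 0 /\ is_derive x 1 L (lower x)}.
  have dL := FTC1Ny_is_derive measurable_lower integrable_lower.
  have dU := FTC1y_is_derive measurable_upper integrable_upper.
  apply: filterS2 dL dU => x dLx dUx.
  by split => //; exact: tails_vanish.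
have L_ae0' : {ae mu, forall x, L x = 0} by apply: filterS L_ae0 => x [].
apply: filterS L_ae0 => x [Lx0 dL].
move/eqP: (is_derive_ae_eq0 L_ae0' Lx0 dL).
by rewrite mulf_eq0 (negbTE (expR_neq0 _)) orbF => /eqP.
Qed.

End laplace_convolution.

Section laplace_shift.
Context {R : realType}.
Local Notation mu := (@lebesgue_measure R).
Variables (b : R) (g : R -> R) (q : R).
Hypothesis mg : measurable_fun setT g.

Lemma laplace_shift_expect_conv : laplace_shift_integrable b g q ->
  mu.-integrable setT (fun x => (g x * laplace_pdf b (x - q))%:E) /\
  laplace_shift_expect b g q = (\int[mu]_x (g x * laplace_pdf b (x - q))%:E)%E.
Proof.
have mk : measurable_fun setT (fun x => (g x * laplace_pdf b (x - q))%:E).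
  apply/measurable_EFinP/measurable_funM => //.
  by apply: measurableT_comp; [exact: measurable_laplace_pdf | exact: measurable_funB].
move=> int_q.
have int_shift :
    mu.-integrable setT (fun z => (g (q + z) * laplace_pdf b (q + z - q))%:E).
  by apply: eq_integrable int_q => // z _; rewrite addrAC subrr add0r.
split; first exact: integrable_translate int_shift.
rewrite -(integral_translate mk int_shift).
by apply: eq_integral => z _; rewrite addrAC subrr add0r.
Qed.

End laplace_shift.

Theorem theorem10 (R : realType) (b : R) (f g1 g2 : R -> R) :
  0 < b ->
  measurable_fun setT g1 -> measurable_fun setT g2 ->
  (forall q : R,
     laplace_shift_integrable b g1 q /\ laplace_shift_integrable b g2 q /\
     laplace_shift_expect b g1 q = (f q)%:E /\
     laplace_shift_expect b g2 q = (f q)%:E) ->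
  {ae (@lebesgue_measure R), forall x, g1 x = g2 x}.
Proof.
move=> b_gt0 mg1 mg2 expect_f.
pose k g q x := (g x * laplace_pdf b (x - q))%:E.
have kB q : (fun x => ((g1 x - g2 x) * laplace_pdf b (x - q))%:E) = (k g1 q \- k g2 q)%E.
  by apply/funext => x; rewrite /k -EFinB mulrBl.
have [int_conv expect_conv] : (forall q, (@lebesgue_measure R).-integrable setT
    (fun x => ((g1 x - g2 x) * laplace_pdf b (x - q))%:E)) /\
  (forall q, \int[@lebesgue_measure R]_x ((g1 x - g2 x) * laplace_pdf b (x - q)) = 0).
  apply: all_and2 => q; have [i1 [i2 [e1 e2]]] := expect_f q.
  have [j1 E1] := laplace_shift_expect_conv mg1 i1.
  have [j2 E2] := laplace_shift_expect_conv mg2 i2.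
  rewrite /Rintegral kB; split; first exact: integrableB.
  by rewrite integralB_EFin // -E1 -E2 e1 e2 subee.
have aefilter := ae_filter_ringOfSetsType (@lebesgue_measure R).
have := ae_eq0_of_laplace_conv_eq0 b_gt0 (measurable_funB mg1 mg2) int_conv expect_conv.
by apply: filterS => x /eqP; rewrite subr_eq0 => /eqP.
Qed.
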